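(* Let $\lambda>0$, $\gamma>2$, $c>0$ and $\rho>0$ be fixed, and let $W_e>0$. Define $$g(r)=r^{-\gamma-2}\Big(\gamma^2+\frac{4W_e}{c^2}r^2\Big),\qquad Z(s)=\int_0^\infty\big[1-e^{-s g(r)}\big]r\,dr,\qquad \mathrm{CRB}_{\mathrm{LB}}=\frac{4}{\rho}\int_0^\infty e^{-2\pi\lambda Z(s)}\,ds,$$ and $$\mathrm{CRB}_{\mathrm{LB,W}}=\frac{c^2(\pi\lambda)^{-\gamma/2}}{\rho W_e}\,\Gamma^{-\gamma/2}\Big(1-\frac{2}{\gamma}\Big)\,\Gamma\Big(1+\frac{\gamma}{2}\Big).$$ Then $$\Big(1-\frac{\pi\lambda c^2\gamma}{2W_e}\Big)\mathrm{CRB}_{\mathrm{LB,W}}<\mathrm{CRB}_{\mathrm{LB}}<\mathrm{CRB}_{\mathrm{LB,W}}.$$ Hence $\mathrm{CRB}_{\mathrm{LB}}/\mathrm{CRB}_{\mathrm{LB,W}}\to 1$ as $W_e\to\infty$, with convergence rate $O(1/W_e)$.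
   Context: Here $\lambda$ is the sensor density of a homogeneous Poisson point process of sensors, $\gamma$ is the path-loss exponent, $c$ is the speed of light, $\rho$ is a signal-to-noise ratio constant, and $W_e$ is the effective bandwidth of the transmitted signal. $\Gamma$ denotes the Gamma function, and $\Gamma^{-\gamma/2}(z)$ means $\Gamma(z)^{-\gamma/2}$. *)

From Stdlib Require Import Reals.
From Coquelicot Require Import Coquelicot.
Open Scope R_scope.

Definition Int0inf (f : R -> R) : R :=
  RInt_gen f (at_right 0) (Rbar_locally p_infty).

Definition Gamma (z : R) : R :=
  Int0inf (fun t => Rpower t (z - 1) * exp (- t)).

Definition gfun (gam c We r : R) : R :=
  Rpower r (- gam - 2) * (gam ^ 2 + 4 * We / c ^ 2 * r ^ 2).

Definition Zfun (gam c We s : R) : R :=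
  Int0inf (fun r => (1 - exp (- s * gfun gam c We r)) * r).

Definition CRB_LB (lam gam c rho We : R) : R :=
  4 / rho * Int0inf (fun s => exp (- 2 * PI * lam * Zfun gam c We s)).

Definition CRB_LBW (lam gam c rho We : R) : R :=
  c ^ 2 * Rpower (PI * lam) (- gam / 2) / (rho * We)
  * Rpower (Gamma (1 - 2 / gam)) (- gam / 2) * Gamma (1 + gam / 2).

From Stdlib Require Import Reals Lra Classical.
From Coquelicot Require Import Coquelicot.
Open Scope R_scope.

(* Write [a = 4 W_e / c^2], so that [s g(r) = s a r^-gam + s gam^2 r^(-gam-2)]. Keeping only
   the first term, substituting [t = s a r^-gam] and integrating by parts gives
   [Z(s) > (s a)^(2/gam) Gamma(1 - 2/gam) / 2]; since
   [1 - e^-(x+y) <= 1 - e^-x + y e^-x], the second term adds at most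
   [int_0^oo s gam^2 r^(-gam-1) e^(-s a r^-gam) dr = gam / a].  Hence, with
   [m = pi lam a^(2/gam) Gamma(1 - 2/gam)],
     [e^(-2 pi lam gam / a) e^(-m s^(2/gam)) <= e^(-2 pi lam Z(s)) < e^(-m s^(2/gam))],
   and [int_0^oo e^(-m s^(2/gam)) ds = m^(-gam/2) Gamma(1 + gam/2)] is [rho CRB_LB,W / 4].
   With [x = 2 pi lam gam / a = pi lam c^2 gam / (2 W_e)], the strict inequality
   [1 - x < e^-x] gives the lower bound, and [x] is also the convergence rate. *)

(** * Elementary inequalities *)

Lemma exp_le x y : x <= y -> exp x <= exp y.
Proof. intros [Hlt|<-]; [left; apply exp_increasing, Hlt|right; reflexivity]. Qed.

Lemma one_minus_exp_bounds x : 0 <= x -> 0 <= 1 - exp (- x) <= x.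
Proof.
  intros Hx. pose proof (exp_ineq1_le (- x)).
  assert (exp (- x) <= 1) by (rewrite <- exp_0; apply exp_le; lra). lra.
Qed.

Lemma exp_neg_le_inv u : 0 < u -> exp (- u) <= / u.
Proof.
  intros Hu. rewrite exp_Ropp. apply Rinv_le_contravar; [exact Hu|].
  pose proof (exp_ineq1_le u). lra.
Qed.

(* From [ln y <= y - 1] at [y = t / (2 q)]. *)
Lemma Rpower_le_exp q t : 0 < q -> 0 < t -> Rpower t q <= Rpower (2 * q) q * exp (t / 2).
Proof.
  intros Hq Ht. unfold Rpower. rewrite <- exp_plus. apply exp_le.
  assert (Hy : 0 < t / (2 * q)) by (apply Rdiv_lt_0_compat; lra).
  pose proof (exp_ineq1_le (ln (t / (2 * q)))) as Hln.
  rewrite exp_ln, ln_div in Hln by lra.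
  assert (q * (ln t - ln (2 * q)) <= q * (t / (2 * q) - 1)) by (apply Rmult_le_compat_l; lra).
  replace (q * (t / (2 * q) - 1)) with (t / 2 - q) in H by (field; lra).
  lra.
Qed.

Lemma one_minus_exp_add x y : 0 <= x -> 0 < y ->
  1 - exp (- x) < 1 - exp (- (x + y)) <= 1 - exp (- x) + y * exp (- x).
Proof.
  intros Hx Hy. rewrite Ropp_plus_distr, exp_plus.
  pose proof (exp_pos (- x)). pose proof (one_minus_exp_bounds y (Rlt_le _ _ Hy)).
  assert (exp (- y) < 1) by (rewrite <- exp_0; apply exp_increasing; lra).
  split; nra.
Qed.

Lemma one_minus_exp_ratio u v : 0 < u -> u <= v ->
  1 - exp (- v) <= v / u * (1 - exp (- u)).
Proof.
  intros Hu Huv.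
  set (A := exp (- u)). set (w := v - u).
  assert (HA : 0 < A) by apply exp_pos.
  assert (HAu : A * (1 + u) <= 1).
  { unfold A. rewrite exp_Ropp. pose proof (exp_ineq1_le u). pose proof (exp_pos u).
    apply (Rmult_le_reg_l (exp u)); [lra|]. field_simplify; lra. }
  assert (Hv : exp (- v) = A * exp (- w)) by (unfold A, w; rewrite <- exp_plus; f_equal; ring).
  pose proof (one_minus_exp_bounds w ltac:(unfold w; lra)).
  assert (Hw : A * w <= w / u * (1 - A)).
  { apply (Rmult_le_reg_r u); [lra|].
    replace (w / u * (1 - A) * u) with (w * (1 - A)) by (field; lra).
    assert (0 <= w) by (unfold w; lra). nra. }
  replace (v / u * (1 - A)) with ((1 - A) + w / u * (1 - A)) by (unfold w; field; lra).
  rewrite Hv. nra.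
Qed.

Lemma Rdiv_2_in_0_1 q : 2 < q -> 0 < 2 / q < 1.
Proof.
  intros Hq. split; [apply Rdiv_lt_0_compat; lra|].
  apply (Rmult_lt_reg_r q); [lra|]. unfold Rdiv. rewrite Rmult_assoc, Rinv_l; lra.
Qed.

Lemma Rpower_minus_1 t z : 0 < t -> Rpower t (z - 1) = Rpower t z / t.
Proof.
  intros Ht. unfold Rminus. rewrite Rpower_plus, Rpower_Ropp, Rpower_1 by exact Ht. reflexivity.
Qed.

Lemma Rpower_neg_1 t : 0 < t -> Rpower t (-1) = / t.
Proof.
  intros Ht. replace (-1) with (Ropp 1) by ring. rewrite Rpower_Ropp, Rpower_1 by exact Ht.
  reflexivity.
Qed.

Lemma Rpower_Rinv_opp r p : 0 < r -> Rpower (/ r) (- p) = Rpower r p.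
Proof. intros Hr. unfold Rpower. rewrite ln_Rinv by exact Hr. f_equal. ring. Qed.

Lemma Rpower_mul_sqr r q : 0 < r -> Rpower r (q - 2) * r ^ 2 = Rpower r q.
Proof.
  intros Hr. replace (r ^ 2) with (Rpower r (INR 2)) by (apply Rpower_pow, Hr).
  rewrite <- Rpower_plus. f_equal. simpl. ring.
Qed.

Lemma Rpower_mul_exp_le z t : 0 < z -> 0 < t ->
  Rpower t z * exp (- t) <= 2 * Rpower (2 * z) z / t.
Proof.
  intros Hz Ht. set (C := Rpower (2 * z) z).
  assert (Hhalf : exp (t / 2) * exp (- (t / 2)) = 1)
    by (rewrite <- exp_plus, <- exp_0; f_equal; ring).
  assert (Hsplit : exp (- t) = exp (- (t / 2)) * exp (- (t / 2)))
    by (rewrite <- exp_plus; f_equal; field).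
  pose proof (exp_pos (- (t / 2))) as He.
  apply Rle_trans with (C * exp (- (t / 2))).
  - rewrite Hsplit, <- Rmult_assoc. apply Rmult_le_compat_r; [lra|].
    rewrite <- (Rmult_1_r C), <- Hhalf, <- Rmult_assoc.
    apply Rmult_le_compat_r; [lra|]. apply Rpower_le_exp; assumption.
  - pose proof (exp_neg_le_inv (t / 2) ltac:(lra)) as Hinv. rewrite Rinv_div in Hinv.
    replace (2 * C / t) with (C * (2 / t)) by (field; lra).
    apply Rmult_le_compat_l; [left; apply exp_pos|exact Hinv].
Qed.

(** * Limits and continuity *)

Lemma at_right_0_iff (P : R -> Prop) :
  at_right 0 P <-> exists d, 0 < d /\ forall x, 0 < x < d -> P x.
Proof.
  split.
  - intros [d Hd]. exists d. split; [apply cond_pos|].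
    intros x Hx. apply Hd; [|lra].
    change (Rabs (x - 0) < d). rewrite Rminus_0_r, Rabs_right; lra.
  - intros (d & Hd & HP). exists (mkposreal d Hd). intros x Hx Hx0.
    change (Rabs (x - 0) < d) in Hx. rewrite Rminus_0_r, Rabs_right in Hx; [|lra].
    apply HP; lra.
Qed.

Lemma at_right_0_pos : at_right 0 (fun x => 0 < x).
Proof. apply at_right_0_iff. exists 1. split; [lra|]. intros x Hx. lra. Qed.

Lemma p_infty_pos : Rbar_locally p_infty (fun x => 0 < x).
Proof. exists 0. auto. Qed.

Lemma filterlim_at_right_0 {T} (F : (T -> Prop) -> Prop) (f : T -> R) : Filter F ->
  (forall d, 0 < d -> F (fun x => 0 < f x < d)) -> filterlim f F (at_right 0).
Proof.
  intros FF Hf P HP. apply at_right_0_iff in HP as (d & Hd & HP).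
  eapply filter_imp; [intros x Hx; apply HP, Hx|]. apply Hf, Hd.
Qed.

Lemma filterlim_p_infty {T} (F : (T -> Prop) -> Prop) (f : T -> R) : Filter F ->
  (forall M, F (fun x => M < f x)) -> filterlim f F (Rbar_locally p_infty).
Proof.
  intros FF Hf P [M HP]. eapply filter_imp; [intros x Hx; apply HP, Hx|]. apply Hf.
Qed.

Lemma filterlim_Rinv_p_infty : filterlim Rinv (Rbar_locally p_infty) (at_right 0).
Proof.
  apply filterlim_at_right_0; [apply Rbar_locally_filter|].
  intros d Hd. exists (/ d). intros x Hx.
  assert (0 < / d) by (apply Rinv_0_lt_compat; lra).
  split; [apply Rinv_0_lt_compat; lra|].
  rewrite <- (Rinv_inv d). apply Rinv_lt_contravar; nra.
Qed.

Lemma filterlim_scal_Rpower_0 b p : 0 < b -> 0 < p ->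
  filterlim (fun r => b * Rpower r p) (at_right 0) (at_right 0).
Proof.
  intros Hb Hp. apply filterlim_at_right_0; [apply at_right_proper_filter|].
  intros d Hd. apply at_right_0_iff. exists (Rpower (d / b) (/ p)).
  split; [apply exp_pos|]. intros x Hx.
  assert (Hxp : Rpower x p < d / b).
  { rewrite <- (Rpower_1 (d / b)) by (apply Rdiv_lt_0_compat; lra).
    replace 1 with (/ p * p) by (field; lra). rewrite <- Rpower_mult.
    apply Rlt_Rpower_l; lra. }
  pose proof (exp_pos (p * ln x)). unfold Rpower in *. split; [nra|].
  apply Rmult_lt_compat_l with (r := b) in Hxp; [|lra].
  replace (b * (d / b)) with d in Hxp by (field; lra). lra.
Qed.

Lemma filterlim_scal_Rpower_p_infty b p : 0 < b -> 0 < p ->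
  filterlim (fun r => b * Rpower r p) (Rbar_locally p_infty) (Rbar_locally p_infty).
Proof.
  intros Hb Hp. apply filterlim_p_infty; [apply Rbar_locally_filter|].
  intros M. set (M' := Rmax M 1 / b).
  assert (HM' : 0 < M') by (unfold M'; apply Rdiv_lt_0_compat; [pose proof (Rmax_r M 1)|]; lra).
  exists (Rpower M' (/ p)). intros x Hx.
  assert (Hx0 : 0 < x) by (pose proof (exp_pos (/ p * ln M')); unfold Rpower in Hx; lra).
  assert (M' < Rpower x p).
  { rewrite <- (Rpower_1 M') by lra.
    replace 1 with (/ p * p) by (field; lra). rewrite <- Rpower_mult.
    apply Rlt_Rpower_l; [lra|split; [apply exp_pos|lra]]. }
  unfold M' in H. apply Rmult_lt_compat_l with (r := b) in H; [|lra].
  replace (b * (Rmax M 1 / b)) with (Rmax M 1) in H by (field; lra).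
  pose proof (Rmax_l M 1). lra.
Qed.

Lemma filterlim_scal_Rpower_neg_0 b p : 0 < b -> p < 0 ->
  filterlim (fun r => b * Rpower r p) (at_right 0) (Rbar_locally p_infty).
Proof.
  intros Hb Hp. apply (filterlim_ext_loc (fun r => b * Rpower (/ r) (- p))).
  - apply at_right_0_iff. exists 1. split; [lra|].
    intros r Hr. rewrite Rpower_Rinv_opp; lra.
  - apply (filterlim_comp _ _ _ Rinv (fun r => b * Rpower r (- p)) _ (Rbar_locally p_infty));
      [apply filterlim_Rinv_0_right|apply filterlim_scal_Rpower_p_infty; lra].
Qed.

Lemma filterlim_scal_Rpower_neg_p_infty b p : 0 < b -> p < 0 ->
  filterlim (fun r => b * Rpower r p) (Rbar_locally p_infty) (at_right 0).
Proof.
  intros Hb Hp. apply (filterlim_ext_loc (fun r => b * Rpower (/ r) (- p))).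
  - exists 0. intros r Hr. rewrite Rpower_Rinv_opp; lra.
  - apply (filterlim_comp _ _ _ Rinv (fun r => b * Rpower r (- p)) _ (at_right 0));
      [apply filterlim_Rinv_p_infty|apply filterlim_scal_Rpower_0; lra].
Qed.

Lemma filterlim_of_abs_le {T} (F : (T -> Prop) -> Prop) (f g : T -> R) l : Filter F ->
  F (fun x => Rabs (f x - l) <= g x) -> filterlim g F (locally 0) ->
  filterlim f F (locally l).
Proof.
  intros FF Hle Hg P [eps HP]. unfold filtermap.
  assert (Hsmall : F (fun x => ball 0 eps (g x))) by exact (Hg _ (locally_ball 0 eps)).
  eapply filter_imp; [|exact (filter_and _ _ Hle Hsmall)].
  intros x [Hx Hgx]. apply HP.
  change (Rabs (g x - 0) < eps) in Hgx. change (Rabs (f x - l) < eps).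
  rewrite Rminus_0_r in Hgx. pose proof (Rle_abs (g x)). lra.
Qed.

Lemma filterlim_scal_Rpower_0_locally b p : 0 < b -> 0 < p ->
  filterlim (fun r => b * Rpower r p) (at_right 0) (locally 0).
Proof.
  intros Hb Hp P HP. apply (filterlim_scal_Rpower_0 b p Hb Hp).
  exact (filter_le_within _ P HP).
Qed.

Lemma filterlim_scal_Rpower_neg_p_infty_locally b p : 0 < b -> p < 0 ->
  filterlim (fun r => b * Rpower r p) (Rbar_locally p_infty) (locally 0).
Proof.
  intros Hb Hp P HP. apply (filterlim_scal_Rpower_neg_p_infty b p Hb Hp).
  exact (filter_le_within _ P HP).
Qed.

Lemma filterlim_of_rate (f : R -> R) l K : 0 < K ->
  (forall x, 0 < x -> Rabs (f x - l) <= K / x) ->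
  filterlim f (Rbar_locally p_infty) (locally l).
Proof.
  intros HK Hf. apply (filterlim_of_abs_le _ _ (fun x => K * Rpower x (-1))); [exact _| |].
  - eapply filter_imp; [|exact p_infty_pos]. intros x Hx.
    rewrite Rpower_neg_1 by exact Hx. apply Hf, Hx.
  - apply filterlim_scal_Rpower_neg_p_infty_locally; lra.
Qed.

Lemma continuous_of_ratio_bounds (Z : R -> R) s0 : 0 < s0 ->
  (forall s t, 0 < s -> s <= t -> Z s <= Z t <= t / s * Z s) -> continuous Z s0.
Proof.
  intros Hs0 HZ.
  assert (HZ0 : 0 <= Z s0).
  { destruct (HZ s0 (2 * s0) Hs0 ltac:(lra)) as [H1 H2].
    replace (2 * s0 / s0) with 2 in H2 by (field; lra). lra. }
  set (L := 2 * Z s0 / s0).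
  assert (HL : 0 <= L) by (apply Rmult_le_pos; [lra|left; apply Rinv_0_lt_compat, Hs0]).
  apply (filterlim_of_abs_le _ _ (fun y => L * Rabs (y - s0))); [exact _| |].
  - assert (Hd : 0 < s0 / 2) by lra.
    exists (mkposreal _ Hd). intros y Hy. change (Rabs (y - s0) < s0 / 2) in Hy.
    apply Rabs_def2 in Hy. destruct (Rle_or_lt s0 y) as [Hle|Hlt].
    + destruct (HZ s0 y Hs0 Hle) as [H1 H2].
      rewrite !Rabs_right by lra.
      assert (Hdiff : y / s0 * Z s0 - Z s0 = (y - s0) * (Z s0 / s0)) by (field; lra).
      assert (Hq : 0 <= Z s0 / s0) by (apply Rdiv_le_0_compat; lra).
      unfold L. replace (2 * Z s0 / s0) with (2 * (Z s0 / s0)) by (field; lra). nra.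
    + destruct (HZ y s0 ltac:(lra) ltac:(lra)) as [H1 H2].
      rewrite Rabs_left1, Rabs_left by lra.
      assert (Hys : y * (Z s0 - Z y) <= (s0 - y) * Z s0).
      { apply (Rmult_le_compat_l y) in H2; [|lra].
        replace (y * (s0 / y * Z y)) with (s0 * Z y) in H2 by (field; lra).
        assert (0 <= (s0 - y) * (Z s0 - Z y)) by (apply Rmult_le_pos; lra). nra. }
      assert (Hhalf : s0 / 2 * (Z s0 - Z y) <= y * (Z s0 - Z y))
        by (apply Rmult_le_compat_r; lra).
      unfold L. apply (Rmult_le_reg_l (s0 / 2)); [lra|].
      replace (s0 / 2 * (2 * Z s0 / s0 * - (y - s0))) with ((s0 - y) * Z s0) by (field; lra).
      lra.
  - replace 0 with (L * Rabs (s0 - s0)) by (rewrite Rminus_eq_0, Rabs_R0; ring).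
    apply (continuous_scal_r L (fun y => Rabs (y - s0))), continuous_Rabs_comp.
    apply (continuous_minus (V := R_NormedModule)); [apply continuous_id|apply continuous_const].
Qed.

(** * Improper integrals over (0, +oo) *)

Definition continuous_on_pos (f : R -> R) := forall x, 0 < x -> continuous f x.

Ltac solve_continuous_on_pos :=
  let x := fresh "x" in let Hx := fresh "Hx" in
  intros x Hx; unfold Rpower;
  apply (ex_derive_continuous (K := R_AbsRing) (V := R_NormedModule)); auto_derive;
  repeat split; try lra.

Definition is_Int0inf (f : R -> R) (l : R) :=
  is_RInt_gen f (at_right 0) (Rbar_locally p_infty) l.

Notation ends_0inf := (filter_prod (at_right 0) (Rbar_locally p_infty)).

Lemma ends_0inf_intro d N : 0 < d ->
  ends_0inf (fun ab => 0 < fst ab < d /\ N < snd ab).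
Proof.
  intros Hd. apply (Filter_prod _ _ _ (fun a => 0 < a < d) (fun b => N < b)).
  - apply at_right_0_iff. exists d. auto.
  - exists N. auto.
  - auto.
Qed.

Lemma ends_0inf_between (P : R -> Prop) : (forall x, 0 < x -> P x) ->
  ends_0inf (fun ab => forall x, Rmin (fst ab) (snd ab) <= x <= Rmax (fst ab) (snd ab) -> P x).
Proof.
  intros HP. eapply filter_imp; [|exact (ends_0inf_intro 1 1 Rlt_0_1)].
  intros [a b] [Ha Hb] x [Hx _]; simpl in *. apply HP.
  rewrite Rmin_left in Hx; lra.
Qed.

Lemma between_pos a b x : 0 < a -> 0 < b -> Rmin a b <= x <= Rmax a b -> 0 < x.
Proof. intros Ha Hb [Hx _]. revert Hx. apply Rmin_case; lra. Qed.

Lemma ex_RInt_pos f a b : continuous_on_pos f -> 0 < a -> 0 < b -> ex_RInt f a b.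
Proof.
  intros Hf Ha Hb. apply (ex_RInt_continuous (V := R_CompleteNormedModule)).
  intros x Hx. apply Hf, (between_pos a b); auto.
Qed.

Lemma is_Int0inf_RInt f l : continuous_on_pos f ->
  is_Int0inf f l <-> filterlim (fun ab => RInt f (fst ab) (snd ab)) ends_0inf (locally l).
Proof.
  intros Hf. split; intros H P HP; specialize (H P HP); unfold filtermapi, filtermap in *.
  - eapply filter_imp; [|exact (filter_and _ _ H (ends_0inf_intro 1 0 Rlt_0_1))].
    intros [a b] [[y [Hy Py]] [Ha Hb]]; simpl in *.
    rewrite (is_RInt_unique _ _ _ _ Hy). exact Py.
  - eapply filter_imp; [|exact (filter_and _ _ H (ends_0inf_intro 1 0 Rlt_0_1))].
    intros [a b] [Py [Ha Hb]]; simpl in *. exists (RInt f a b). split; [|exact Py].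
    apply (RInt_correct (V := R_CompleteNormedModule)), ex_RInt_pos; auto; lra.
Qed.

Lemma is_Int0inf_unique f l : is_Int0inf f l -> Int0inf f = l.
Proof. intros H. unfold Int0inf. apply is_RInt_gen_unique; exact H. Qed.

Lemma is_Int0inf_ext f g l : (forall x, 0 < x -> f x = g x) ->
  is_Int0inf f l -> is_Int0inf g l.
Proof.
  intros Hfg. apply (is_RInt_gen_ext (Fa := at_right 0) (Fb := Rbar_locally p_infty) f g l).
  eapply filter_imp; [|exact (ends_0inf_between _ Hfg)]. intros ab H x Hx. apply H; lra.
Qed.

Lemma is_Int0inf_scal f k l : is_Int0inf f l -> is_Int0inf (fun x => k * f x) (k * l).
Proof. apply (is_RInt_gen_scal f k l). Qed.

Lemma is_Int0inf_plus f g lf lg : is_Int0inf f lf -> is_Int0inf g lg ->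
  is_Int0inf (fun x => f x + g x) (lf + lg).
Proof. apply (is_RInt_gen_plus f g lf lg). Qed.

Lemma is_Int0inf_minus f g lf lg : is_Int0inf f lf -> is_Int0inf g lg ->
  is_Int0inf (fun x => f x - g x) (lf - lg).
Proof. apply (is_RInt_gen_minus f g lf lg). Qed.

Lemma RInt_interval_mono f a' a b b' : continuous_on_pos f -> (forall x, 0 < x -> 0 <= f x) ->
  0 < a' <= a -> a <= b <= b' -> RInt f a b <= RInt f a' b'.
Proof.
  intros Hf Hpos Ha Hb.
  assert (Hge0 : forall u v, 0 < u <= v -> 0 <= RInt f u v).
  { intros u v Huv. apply RInt_ge_0; [lra|apply ex_RInt_pos; auto; lra|].
    intros x Hx. apply Hpos. lra. }
  rewrite <- (RInt_Chasles f a' a b'), <- (RInt_Chasles f a b b');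
    try (apply ex_RInt_pos; auto; lra).
  unfold plus; simpl.
  assert (0 <= RInt f a' a) by (apply Hge0; lra).
  assert (0 <= RInt f b b') by (apply Hge0; lra).
  lra.
Qed.

Lemma RInt_le_Int0inf f l a b : continuous_on_pos f -> is_Int0inf f l ->
  (forall x, 0 < x -> 0 <= f x) -> 0 < a -> a <= b -> RInt f a b <= l.
Proof.
  intros Hf Hl Hpos Ha Hab. apply is_Int0inf_RInt in Hl; [|exact Hf].
  assert (H : Rbar_le (RInt f a b) l); [|exact H].
  apply (filterlim_le (F := ends_0inf) (fun _ => RInt f a b) (fun ab => RInt f (fst ab) (snd ab)));
    [|apply filterlim_const|exact Hl].
  eapply filter_imp; [|exact (ends_0inf_intro a b Ha)].
  intros [a' b'] [Ha' Hb']; simpl in *.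
  apply RInt_interval_mono; auto; lra.
Qed.

Lemma is_Int0inf_le f g lf lg : continuous_on_pos f -> continuous_on_pos g ->
  is_Int0inf f lf -> is_Int0inf g lg -> (forall x, 0 < x -> f x <= g x) -> lf <= lg.
Proof.
  intros Hf Hg Hlf Hlg Hfg.
  apply is_Int0inf_RInt in Hlf; [|exact Hf]. apply is_Int0inf_RInt in Hlg; [|exact Hg].
  assert (H : Rbar_le lf lg); [|exact H].
  apply (filterlim_le (F := ends_0inf) (fun ab => RInt f (fst ab) (snd ab))
           (fun ab => RInt g (fst ab) (snd ab))); [|exact Hlf|exact Hlg].
  eapply filter_imp; [|exact (ends_0inf_intro 1 1 Rlt_0_1)].
  intros [a b] [Ha Hb]; simpl in *.
  apply RInt_le; [lra|apply ex_RInt_pos; auto; lra|apply ex_RInt_pos; auto; lra|].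
  intros x Hx. apply Hfg. lra.
Qed.

Lemma is_Int0inf_pos f l : continuous_on_pos f -> is_Int0inf f l ->
  (forall x, 0 < x -> 0 < f x) -> 0 < l.
Proof.
  intros Hf Hl Hpos. apply Rlt_le_trans with (RInt f 1 2).
  - apply RInt_gt_0; [lra| |]; intros x Hx; [apply Hpos|apply Hf]; lra.
  - apply (RInt_le_Int0inf f); auto; try lra. intros x Hx. left. auto.
Qed.

Lemma is_Int0inf_lt f g lf lg : continuous_on_pos f -> continuous_on_pos g ->
  is_Int0inf f lf -> is_Int0inf g lg -> (forall x, 0 < x -> f x < g x) -> lf < lg.
Proof.
  intros Hf Hg Hlf Hlg Hfg.
  cut (0 < lg - lf); [lra|].
  apply (is_Int0inf_pos (fun x => g x - f x)).
  - intros x Hx. apply (continuous_minus (V := R_NormedModule)); auto.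
  - apply is_Int0inf_minus; auto.
  - intros x Hx. specialize (Hfg x Hx). lra.
Qed.

Lemma ex_Int0inf_of_bounded f M : continuous_on_pos f -> (forall x, 0 < x -> 0 <= f x) ->
  (forall a b, 0 < a -> a <= b -> RInt f a b <= M) -> exists l, is_Int0inf f l.
Proof.
  intros Hf Hpos HM.
  set (E := fun y => exists a b, 0 < a /\ a <= b /\ y = RInt f a b).
  destruct (completeness E) as [l [Hub Hlub]].
  - exists M. intros y (a & b & Ha & Hab & ->). auto.
  - exists (RInt f 1 1), 1, 1. repeat split; lra.
  - exists l. apply is_Int0inf_RInt; [exact Hf|]. intros P [eps HP].
    assert (Hnear : exists a0 b0, 0 < a0 /\ a0 <= b0 /\ l - eps < RInt f a0 b0).
    { apply NNPP. intros Hn. cut (l <= l - eps); [pose proof (cond_pos eps); lra|].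
      apply Hlub. intros y (a & b & Ha & Hab & ->).
      apply Rnot_lt_le. intros Hlt. apply Hn. exists a, b. auto. }
    destruct Hnear as (a0 & b0 & Ha0 & Hab0 & Hl0).
    unfold filtermap. eapply filter_imp; [|exact (ends_0inf_intro a0 b0 Ha0)].
    intros [a b] [Ha Hb]; simpl in *. apply HP.
    assert (RInt f a0 b0 <= RInt f a b) by (apply RInt_interval_mono; auto; lra).
    assert (RInt f a b <= l) by (apply Hub; exists a, b; repeat split; lra).
    change (Rabs (RInt f a b - l) < eps). apply Rabs_def1; lra.
Qed.

Lemma ex_Int0inf_dominated f g lg : continuous_on_pos f -> continuous_on_pos g ->
  (forall x, 0 < x -> 0 <= f x <= g x) -> is_Int0inf g lg -> exists l, is_Int0inf f l.
Proof.
  intros Hf Hg Hfg Hlg. apply (ex_Int0inf_of_bounded f lg Hf); [apply Hfg|].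
  intros a b Ha Hab. apply Rle_trans with (RInt g a b).
  - apply RInt_le; [lra|apply ex_RInt_pos; auto; lra|apply ex_RInt_pos; auto; lra|].
    intros x Hx. apply Hfg. lra.
  - apply (RInt_le_Int0inf g); auto. intros x Hx. pose proof (Hfg x Hx). lra.
Qed.

Lemma ex_Int0inf_of_primitive_bounded f g G L U :
  continuous_on_pos f -> continuous_on_pos g ->
  (forall x, 0 < x -> is_derive G x (g x)) -> (forall x, 0 < x -> L <= G x <= U) ->
  (forall x, 0 < x -> 0 <= f x <= g x) -> exists l, is_Int0inf f l.
Proof.
  intros Hf Hg HG HGb Hfg. apply (ex_Int0inf_of_bounded f (U - L) Hf); [apply Hfg|].
  intros a b Ha Hab. apply Rle_trans with (RInt g a b).
  - apply RInt_le; [lra|apply ex_RInt_pos; auto; lra|apply ex_RInt_pos; auto; lra|].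
    intros x Hx. apply Hfg. lra.
  - rewrite (is_RInt_unique g a b (G b - G a)).
    + pose proof (HGb a Ha). pose proof (HGb b ltac:(lra)). lra.
    + apply (is_RInt_derive (V := R_CompleteNormedModule)); intros x Hx;
        [apply HG|apply Hg]; apply (between_pos a b); auto; lra.
Qed.

Lemma is_Int0inf_derive G g A B : (forall x, 0 < x -> is_derive G x (g x)) ->
  continuous_on_pos g -> filterlim G (at_right 0) (locally A) ->
  filterlim G (Rbar_locally p_infty) (locally B) -> is_Int0inf g (B - A).
Proof.
  intros HG Hg HA HB.
  assert (HDG : forall x, 0 < x -> Derive G x = g x) by (intros; apply is_derive_unique; auto).
  apply (is_Int0inf_ext (Derive G)); [exact HDG|].
  apply (is_RInt_gen_Derive (Fa := at_right 0) (Fb := Rbar_locally p_infty) G A B); auto.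
  - apply ends_0inf_between. intros x Hx. exists (g x). auto.
  - apply ends_0inf_between. intros x Hx.
    apply (continuous_ext_loc _ g); [|auto].
    unfold filtermap. apply (filter_imp (fun y => 0 < y)); [intros; symmetry; auto|].
    exists (mkposreal x Hx). intros y Hy. change (Rabs (y - x) < x) in Hy.
    apply Rabs_def2 in Hy. lra.
Qed.

Lemma is_Int0inf_comp_incr f phi dphi l : continuous_on_pos f -> continuous_on_pos dphi ->
  (forall x, 0 < x -> is_derive phi x (dphi x)) -> (forall x, 0 < x -> 0 < phi x) ->
  filterlim phi (at_right 0) (at_right 0) ->
  filterlim phi (Rbar_locally p_infty) (Rbar_locally p_infty) ->
  is_Int0inf f l -> is_Int0inf (fun x => dphi x * f (phi x)) l.
Proof.
  intros Hf Hd Hphi Hpos H0 Hinf Hl P HP.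
  destruct (Hl P HP) as [Q R HQ HR HQR].
  apply (Filter_prod _ _ _ (fun a => 0 < a /\ Q (phi a)) (fun b => 0 < b /\ R (phi b))).
  - apply filter_and; [apply at_right_0_iff; exists 1; split; intros; lra|apply H0, HQ].
  - apply filter_and; [exists 0; auto|apply Hinf, HR].
  - intros a b [Ha Qa] [Hb Rb]. destruct (HQR _ _ Qa Rb) as [y [Hy Py]]; simpl in *.
    exists y. split; [|exact Py].
    rewrite <- (is_RInt_unique _ _ _ _ Hy).
    apply (is_RInt_comp (V := R_CompleteNormedModule) f phi dphi a b).
    + intros x Hx. apply Hf, Hpos, (between_pos a b); auto.
    + intros x Hx. pose proof (between_pos a b x Ha Hb Hx). auto.
Qed.

Lemma is_Int0inf_comp_decr f phi dphi l : continuous_on_pos f -> continuous_on_pos dphi ->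
  (forall x, 0 < x -> is_derive phi x (dphi x)) -> (forall x, 0 < x -> 0 < phi x) ->
  filterlim phi (at_right 0) (Rbar_locally p_infty) ->
  filterlim phi (Rbar_locally p_infty) (at_right 0) ->
  is_Int0inf f l -> is_Int0inf (fun x => - dphi x * f (phi x)) l.
Proof.
  intros Hf Hd Hphi Hpos H0 Hinf Hl P HP.
  destruct (Hl P HP) as [Q R HQ HR HQR].
  apply (Filter_prod _ _ _ (fun a => 0 < a /\ R (phi a)) (fun b => 0 < b /\ Q (phi b))).
  - apply filter_and; [apply at_right_0_iff; exists 1; split; intros; lra|apply H0, HR].
  - apply filter_and; [exists 0; auto|apply Hinf, HQ].
  - intros a b [Ha Ra] [Hb Qb]. destruct (HQR _ _ Qb Ra) as [y [Hy Py]]; simpl in *.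
    exists y. split; [|exact Py].
    assert (Hy' : RInt (fun t => - f t) (phi a) (phi b) = y).
    { rewrite <- (is_RInt_unique _ _ _ _ Hy), (RInt_opp (V := R_CompleteNormedModule)),
        (opp_RInt_swap (V := R_CompleteNormedModule)); auto; apply ex_RInt_pos; auto. }
    rewrite <- Hy'. apply (is_RInt_ext (fun x => scal (dphi x) (- f (phi x)))).
    { intros x _. unfold scal; simpl; unfold mult; simpl. ring. }
    apply (is_RInt_comp (V := R_CompleteNormedModule) (fun t => - f t) phi dphi a b).
    + intros x Hx.
      apply (continuous_opp (V := R_NormedModule) f), Hf, Hpos, (between_pos a b); auto.
    + intros x Hx. pose proof (between_pos a b x Ha Hb Hx). auto.
Qed.

Lemma is_derive_scal_Rpower b p x : 0 < x ->
  is_derive (fun r => b * Rpower r p) x (b * p * Rpower x (p - 1)).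
Proof.
  intros Hx. rewrite Rmult_assoc.
  apply (is_derive_scal (fun r => Rpower r p)), is_derive_Reals, derivable_pt_lim_power, Hx.
Qed.

Lemma is_Int0inf_comp_scal_Rpower f b p l : continuous_on_pos f -> 0 < b -> p <> 0 ->
  is_Int0inf f l ->
  is_Int0inf (fun r => b * Rabs p * Rpower r (p - 1) * f (b * Rpower r p)) l.
Proof.
  intros Hf Hb Hp Hl.
  assert (Hd : continuous_on_pos (fun r => b * p * Rpower r (p - 1)))
    by solve_continuous_on_pos.
  assert (Hpos : forall x, 0 < x -> 0 < b * Rpower x p)
    by (intros x _; apply Rmult_lt_0_compat; [exact Hb|apply exp_pos]).
  destruct (Rdichotomy _ _ Hp) as [Hneg|Hpos'].
  - eapply is_Int0inf_ext;
      [|exact (is_Int0inf_comp_decr f _ _ l Hf Hd (is_derive_scal_Rpower b p) Hpos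
                 (filterlim_scal_Rpower_neg_0 b p Hb Hneg)
                 (filterlim_scal_Rpower_neg_p_infty b p Hb Hneg) Hl)].
    intros x Hx. rewrite Rabs_left by exact Hneg. ring.
  - eapply is_Int0inf_ext;
      [|exact (is_Int0inf_comp_incr f _ _ l Hf Hd (is_derive_scal_Rpower b p) Hpos
                 (filterlim_scal_Rpower_0 b p Hb Hpos')
                 (filterlim_scal_Rpower_p_infty b p Hb Hpos') Hl)].
    intros x Hx. rewrite Rabs_right by lra. ring.
Qed.

(** * The Gamma function *)

Lemma Gamma_integrand_le z t : 0 < z -> 0 < t ->
  Rpower t (z - 1) * exp (- t)
  <= (1 + Rpower (2 * z) z) ^ 2 * Rpower t (z - 1) / (1 + Rpower t z) ^ 2.
Proof.
  intros Hz Ht.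
  set (P := Rpower t z). set (E := Rpower t (z - 1)). set (K := (1 + Rpower (2 * z) z) ^ 2).
  assert (HP : 0 < P) by apply exp_pos.
  assert (H1 : 1 + P <= (1 + Rpower (2 * z) z) * exp (t / 2)).
  { pose proof (Rpower_le_exp z t Hz Ht) as Hpow. fold P in Hpow.
    assert (1 <= exp (t / 2)) by (rewrite <- exp_0; apply exp_le; lra). lra. }
  assert (H2 : (1 + P) ^ 2 <= K * exp t).
  { unfold K. replace (exp t) with (exp (t / 2) ^ 2)
      by (simpl; rewrite Rmult_1_r, <- exp_plus; f_equal; field).
    rewrite <- Rpow_mult_distr. apply pow_incr. lra. }
  assert (Het : exp (- t) * exp t = 1) by (rewrite <- exp_plus, <- exp_0; f_equal; ring).
  assert (H3 : 0 < (1 + P) ^ 2) by (apply pow_lt; lra).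
  apply (Rmult_le_reg_r ((1 + P) ^ 2)); [exact H3|].
  replace (K * E / (1 + P) ^ 2 * (1 + P) ^ 2) with (E * K) by (field; lra).
  rewrite Rmult_assoc. apply Rmult_le_compat_l; [left; apply exp_pos|].
  apply Rle_trans with (exp (- t) * (K * exp t)).
  - apply Rmult_le_compat_l; [left; apply exp_pos|exact H2].
  - right. rewrite (Rmult_comm K), <- Rmult_assoc, Het. ring.
Qed.

Lemma ex_Int0inf_Gamma z : 0 < z ->
  exists l, is_Int0inf (fun t => Rpower t (z - 1) * exp (- t)) l.
Proof.
  intros Hz. set (K := (1 + Rpower (2 * z) z) ^ 2).
  assert (HK : 0 < K) by (apply pow_lt; pose proof (exp_pos (z * ln (2 * z))); unfold Rpower; lra).
  apply (ex_Int0inf_of_primitive_bounded _ (fun t => K * Rpower t (z - 1) / (1 + Rpower t z) ^ 2)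
           (fun t => - (K / z) / (1 + Rpower t z)) (- (K / z)) 0).
  - solve_continuous_on_pos.
  - solve_continuous_on_pos. pose proof (exp_pos (z * ln x)).
    rewrite Rmult_1_r. apply Rgt_not_eq, Rmult_lt_0_compat; lra.
  - intros t Ht. rewrite Rpower_minus_1 by exact Ht. unfold Rpower.
    pose proof (exp_pos (z * ln t)). auto_derive; [lra|field; lra].
  - intros t Ht. assert (HP : 0 < Rpower t z) by apply exp_pos.
    assert (0 < K / z) by (apply Rdiv_lt_0_compat; lra).
    assert (HQ : 0 < / (1 + Rpower t z) <= 1).
    { split; [apply Rinv_0_lt_compat; lra|].
      rewrite <- Rinv_1. apply Rinv_le_contravar; lra. }
    unfold Rdiv at 2. split; [|nra].
    assert (0 <= K / z * (1 - / (1 + Rpower t z))) by (apply Rmult_le_pos; lra). lra.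
  - intros t Ht. split.
    + left. apply Rmult_lt_0_compat; apply exp_pos.
    + apply Gamma_integrand_le; assumption.
Qed.

Lemma is_Int0inf_Gamma z : 0 < z ->
  is_Int0inf (fun t => Rpower t (z - 1) * exp (- t)) (Gamma z).
Proof.
  intros Hz. destruct (ex_Int0inf_Gamma z Hz) as [l Hl].
  unfold Gamma. rewrite (is_Int0inf_unique _ _ Hl). exact Hl.
Qed.

Lemma Gammgfun_coef_pos z : 0 < z -> 0 < Gamma z.
Proof.
  intros Hz. apply (is_Int0inf_pos (fun t => Rpower t (z - 1) * exp (- t))).
  - solve_continuous_on_pos.
  - apply is_Int0inf_Gamma, Hz.
  - intros t _. apply Rmult_lt_0_compat; apply exp_pos.
Qed.

Lemma Gamma_succ z : 0 < z -> Gamma (1 + z) = z * Gamma z.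
Proof.
  intros Hz.
  assert (Hparts : is_Int0inf (fun t => z * (Rpower t (z - 1) * exp (- t)) - Rpower t z * exp (- t))
                     (0 - 0)).
  { apply (is_Int0inf_derive (fun t => Rpower t z * exp (- t))).
    - intros t Ht. rewrite Rpower_minus_1 by exact Ht. unfold Rpower.
      auto_derive; [exact Ht|field; lra].
    - solve_continuous_on_pos.
    - apply (filterlim_of_abs_le _ _ (fun t => 1 * Rpower t z)); [exact _| |].
      + eapply filter_imp; [|exact at_right_0_pos]. intros t Ht.
        rewrite Rminus_0_r, Rabs_right, Rmult_1_l.
        * pose proof (exp_pos (z * ln t)).
          assert (exp (- t) <= 1) by (rewrite <- exp_0; apply exp_le; lra). unfold Rpower. nra.
        * apply Rle_ge, Rmult_le_pos; left; apply exp_pos.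
      + apply filterlim_scal_Rpower_0_locally; lra.
    - set (C := Rpower (2 * z) z).
      assert (HC : 0 < C) by apply exp_pos.
      apply (filterlim_of_abs_le _ _ (fun t => (2 * C) * Rpower t (-1))); [exact _| |].
      + eapply filter_imp; [|exact p_infty_pos]. intros t Ht.
        rewrite Rminus_0_r, Rabs_right by (apply Rle_ge, Rmult_le_pos; left; apply exp_pos).
        rewrite Rpower_neg_1 by exact Ht. apply Rpower_mul_exp_le; assumption.
      + apply filterlim_scal_Rpower_neg_p_infty_locally; lra. }
  apply is_Int0inf_unique.
  replace (z * Gamma z) with (z * Gamma z - (0 - 0)) by ring.
  eapply is_Int0inf_ext;
    [|exact (is_Int0inf_minus _ _ _ _ (is_Int0inf_scal _ z _ (is_Int0inf_Gamma z Hz)) Hparts)].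
  intros t _. replace (1 + z - 1) with z by ring. ring.
Qed.

Lemma is_Int0inf_exp_Rpower m p : 0 < m -> 0 < p ->
  is_Int0inf (fun s => exp (- (m * Rpower s p))) (Rpower m (- / p) * Gamma (1 + / p)).
Proof.
  intros Hm Hp.
  assert (Hinv : 0 < / p) by (apply Rinv_0_lt_compat; exact Hp).
  assert (H := is_Int0inf_comp_scal_Rpower (fun t => Rpower t (/ p - 1) * exp (- t)) m p _
                 ltac:(solve_continuous_on_pos) Hm (Rgt_not_eq _ _ Hp) (is_Int0inf_Gamma _ Hinv)).
  apply (is_Int0inf_scal _ (Rpower m (- / p) / p)) in H.
  rewrite Gamma_succ by exact Hinv.
  replace (Rpower m (- / p) * (/ p * Gamma (/ p)))
    with (Rpower m (- / p) / p * Gamma (/ p)) by (field; lra).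
  eapply is_Int0inf_ext; [|exact H]. intros s Hs. cbv beta.
  assert (Hsp : 0 < Rpower s p) by apply exp_pos.
  rewrite Rabs_right, <- Rpower_mult_distr, Rpower_mult by lra.
  assert (Em : Rpower m (- / p) * m * Rpower m (/ p - 1) = 1).
  { rewrite <- (Rpower_1 m) at 2 by exact Hm. rewrite <- !Rpower_plus.
    replace (- / p + 1 + (/ p - 1)) with 0 by ring. apply Rpower_O, Hm. }
  assert (Es : Rpower s (p - 1) * Rpower s (p * (/ p - 1)) = 1).
  { rewrite <- Rpower_plus. replace (p - 1 + p * (/ p - 1)) with 0 by (field; lra).
    apply Rpower_O, Hs. }
  transitivity ((Rpower m (- / p) * m * Rpower m (/ p - 1))
                * (Rpower s (p - 1) * Rpower s (p * (/ p - 1)))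
                * exp (- (m * Rpower s p))); [field; lra|].
  rewrite Em, Es. ring.
Qed.

Lemma is_Int0inf_one_minus_exp z : 0 < z < 1 ->
  is_Int0inf (fun t => (1 - exp (- t)) * Rpower t (- z - 1)) (Gamma (1 - z) / z).
Proof.
  intros Hz.
  assert (Hparts : is_Int0inf (fun t => Rpower t (1 - z - 1) * exp (- t)
                                       - z * ((1 - exp (- t)) * Rpower t (- z - 1))) (0 - 0)).
  { apply (is_Int0inf_derive (fun t => (1 - exp (- t)) * Rpower t (- z))).
    - intros t Ht. replace (1 - z - 1) with (- z) by ring.
      rewrite Rpower_minus_1 by exact Ht. unfold Rpower. auto_derive; [exact Ht|field; lra].
    - solve_continuous_on_pos.
    - apply (filterlim_of_abs_le _ _ (fun t => 1 * Rpower t (1 - z))); [exact _| |].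
      + eapply filter_imp; [|exact at_right_0_pos]. intros t Ht.
        pose proof (one_minus_exp_bounds t (Rlt_le _ _ Ht)).
        assert (Hpow : t * Rpower t (- z) = Rpower t (1 - z)).
        { unfold Rminus. rewrite Rplus_comm, Rpower_plus, Rpower_1 by exact Ht. ring. }
        assert (Hp : 0 < Rpower t (- z)) by apply exp_pos.
        rewrite Rminus_0_r, Rmult_1_l, <- Hpow, Rabs_right by (apply Rle_ge, Rmult_le_pos; lra).
        apply Rmult_le_compat_r; [left; exact Hp|lra].
      + apply filterlim_scal_Rpower_0_locally; lra.
    - apply (filterlim_of_abs_le _ _ (fun t => 1 * Rpower t (- z))); [exact _| |].
      + eapply filter_imp; [|exact p_infty_pos]. intros t Ht.
        pose proof (one_minus_exp_bounds t (Rlt_le _ _ Ht)). pose proof (exp_pos (- t)).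
        assert (Hp : 0 < Rpower t (- z)) by apply exp_pos.
        rewrite Rminus_0_r, Rmult_1_l, Rabs_right by (apply Rle_ge, Rmult_le_pos; lra).
        rewrite <- (Rmult_1_l (Rpower t (- z))) at 2.
        apply Rmult_le_compat_r; [left; exact Hp|lra].
      + apply filterlim_scal_Rpower_neg_p_infty_locally; lra. }
  assert (Hz0 : 0 < 1 - z) by lra.
  pose proof (is_Int0inf_scal _ (/ z) _
                (is_Int0inf_minus _ _ _ _ (is_Int0inf_Gamma _ Hz0) Hparts)) as H.
  replace (Gamma (1 - z) / z) with (/ z * (Gamma (1 - z) - (0 - 0))) by (field; lra).
  eapply is_Int0inf_ext; [|exact H]. intros t _. cbv beta. field. lra.
Qed.

Lemma is_Int0inf_one_minus_exp_Rpower b q : 0 < b -> 2 < q ->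
  is_Int0inf (fun r => (1 - exp (- (b * Rpower r (- q)))) * r)
             (Rpower b (2 / q) * Gamma (1 - 2 / q) / 2).
Proof.
  intros Hb Hq. pose proof (Rdiv_2_in_0_1 q Hq) as Hz.
  assert (H := is_Int0inf_comp_scal_Rpower (fun t => (1 - exp (- t)) * Rpower t (- (2 / q) - 1))
                 b (- q) _ ltac:(solve_continuous_on_pos) Hb ltac:(lra)
                 (is_Int0inf_one_minus_exp _ Hz)).
  apply (is_Int0inf_scal _ (Rpower b (2 / q) / q)) in H.
  replace (Rpower b (2 / q) * Gamma (1 - 2 / q) / 2)
    with (Rpower b (2 / q) / q * (Gamma (1 - 2 / q) / (2 / q))) by (field; lra).
  eapply is_Int0inf_ext; [|exact H]. intros r Hr. cbv beta.
  assert (Hrq : 0 < Rpower r (- q)) by apply exp_pos.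
  rewrite Rabs_left, <- Rpower_mult_distr, Rpower_mult by lra.
  assert (Eb : Rpower b (2 / q) * b * Rpower b (- (2 / q) - 1) = 1).
  { rewrite <- (Rpower_1 b) at 2 by exact Hb. rewrite <- !Rpower_plus.
    replace (2 / q + 1 + (- (2 / q) - 1)) with 0 by ring. apply Rpower_O, Hb. }
  assert (Er : Rpower r (- q - 1) * Rpower r (- q * (- (2 / q) - 1)) = r).
  { rewrite <- Rpower_plus. replace (- q - 1 + - q * (- (2 / q) - 1)) with 1 by (field; lra).
    apply Rpower_1, Hr. }
  transitivity ((Rpower b (2 / q) * b * Rpower b (- (2 / q) - 1))
                * (Rpower r (- q - 1) * Rpower r (- q * (- (2 / q) - 1)))
                * (1 - exp (- (b * Rpower r (- q))))); [field; lra|].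
  rewrite Eb, Er. ring.
Qed.

Lemma is_Int0inf_Rpower_exp_Rpower b q : 0 < b -> 0 < q ->
  is_Int0inf (fun r => Rpower r (- q - 1) * exp (- (b * Rpower r (- q)))) (/ (b * q)).
Proof.
  intros Hb Hq. replace (/ (b * q)) with (/ (b * q) - 0) by ring.
  apply (is_Int0inf_derive (fun r => / (b * q) * exp (- (b * Rpower r (- q))))).
  - intros r Hr. rewrite Rpower_minus_1 by exact Hr. unfold Rpower.
    auto_derive; [exact Hr|field; lra].
  - solve_continuous_on_pos.
  - apply (filterlim_of_abs_le _ _ (fun r => / (b * b * q) * Rpower r q)); [exact _| |].
    + eapply filter_imp; [|exact at_right_0_pos]. intros r Hr.
      assert (Hx : 0 < b * Rpower r (- q)) by (apply Rmult_lt_0_compat; [lra|apply exp_pos]).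
      pose proof (exp_neg_le_inv _ Hx). pose proof (exp_pos (- (b * Rpower r (- q)))).
      assert (Hinv : / (b * Rpower r (- q)) = / b * Rpower r q).
      { rewrite Rpower_Ropp, Rinv_mult, Rinv_inv. reflexivity. }
      assert (0 < / (b * q)) by (apply Rinv_0_lt_compat, Rmult_lt_0_compat; lra).
      rewrite Rminus_0_r, Rabs_right by (apply Rle_ge, Rmult_le_pos; lra).
      replace (/ (b * b * q) * Rpower r q) with (/ (b * q) * (/ b * Rpower r q)) by (field; lra).
      apply Rmult_le_compat_l; lra.
    + apply filterlim_scal_Rpower_0_locally; [apply Rinv_0_lt_compat, Rmult_lt_0_compat; nra|lra].
  - apply (filterlim_of_abs_le _ _ (fun r => / q * Rpower r (- q))); [exact _| |].
    + eapply filter_imp; [|exact p_infty_pos]. intros r Hr.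
      assert (Hx : 0 <= b * Rpower r (- q)) by (apply Rmult_le_pos; [lra|left; apply exp_pos]).
      pose proof (one_minus_exp_bounds _ Hx).
      assert (0 < / (b * q)) by (apply Rinv_0_lt_compat, Rmult_lt_0_compat; lra).
      replace (/ (b * q) * exp (- (b * Rpower r (- q))) - / (b * q))
        with (- (/ (b * q) * (1 - exp (- (b * Rpower r (- q)))))) by ring.
      rewrite Rabs_Ropp, Rabs_right by (apply Rle_ge, Rmult_le_pos; lra).
      replace (/ q * Rpower r (- q)) with (/ (b * q) * (b * Rpower r (- q))) by (field; lra).
      apply Rmult_le_compat_l; lra.
    + apply filterlim_scal_Rpower_neg_p_infty_locally; [apply Rinv_0_lt_compat|]; lra.
Qed.

(** * Bounds on Z and CRB_LB *)

Section Bounds.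

Variables lam gam c rho We : R.
Hypotheses (Hlam : 0 < lam) (Hgam : 2 < gam) (Hc : 0 < c) (Hrho : 0 < rho) (HWe : 0 < We).

Local Notation a := (4 * We / c ^ 2).
Local Notation "'integrand' s" := (fun r => (1 - exp (- s * gfun gam c We r)) * r)
  (at level 10, s at level 9).
Local Notation "'base' s" := (fun r => (1 - exp (- (s * a * Rpower r (- gam)))) * r)
  (at level 10, s at level 9).
Local Notation "'correction' s" :=
  (fun r => s * gam ^ 2 * (Rpower r (- gam - 1) * exp (- (s * a * Rpower r (- gam)))))
  (at level 10, s at level 9).

Lemma gfun_coef_pos : 0 < a.
Proof. apply Rdiv_lt_0_compat; [lra|apply pow_lt, Hc]. Qed.

Lemma Zfun_integrand_bounds s r : 0 < s -> 0 < r ->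
  0 <= (base s) r /\ (base s) r < (integrand s) r <= (base s) r + (correction s) r.
Proof.
  intros Hs Hr. pose proof gfun_coef_pos.
  assert (Hx : 0 <= s * a * Rpower r (- gam))
    by (apply Rmult_le_pos; [nra|left; apply exp_pos]).
  assert (Hy : 0 < s * gam ^ 2 * Rpower r (- gam - 2))
    by (apply Rmult_lt_0_compat; [apply Rmult_lt_0_compat; [lra|apply pow_lt; lra]|apply exp_pos]).
  assert (Hg : - s * gfun gam c We r
               = - (s * a * Rpower r (- gam) + s * gam ^ 2 * Rpower r (- gam - 2))).
  { unfold gfun. rewrite <- (Rpower_mul_sqr r (- gam)) by exact Hr. ring. }
  assert (Hyr : s * gam ^ 2 * Rpower r (- gam - 2) * r = s * gam ^ 2 * Rpower r (- gam - 1)).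
  { replace (- gam - 2) with (- gam - 1 - 1) by ring.
    rewrite (Rpower_minus_1 r (- gam - 1)) by exact Hr. field. lra. }
  cbv beta. rewrite Hg.
  pose proof (one_minus_exp_bounds _ Hx).
  destruct (one_minus_exp_add _ _ Hx Hy) as [Hlow Hup]. split; [|split].
  - apply Rmult_le_pos; lra.
  - apply Rmult_lt_compat_r; assumption.
  - apply (Rmult_le_compat_r r) in Hup; [|lra].
    set (E := exp (- (s * a * Rpower r (- gam)))) in *.
    assert (Hcorr : s * gam ^ 2 * Rpower r (- gam - 2) * E * r
                    = s * gam ^ 2 * (Rpower r (- gam - 1) * E))
      by (transitivity (s * gam ^ 2 * Rpower r (- gam - 2) * r * E); [ring|rewrite Hyr; ring]).
    lra.
Qed.

Lemma is_Int0inf_Zfun_base s : 0 < s ->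
  is_Int0inf (base s) (Rpower (s * a) (2 / gam) * Gamma (1 - 2 / gam) / 2).
Proof.
  intros Hs. pose proof gfun_coef_pos.
  apply is_Int0inf_one_minus_exp_Rpower; [nra|exact Hgam].
Qed.

Lemma is_Int0inf_Zfun_correction s : 0 < s -> is_Int0inf (correction s) (gam / a).
Proof.
  intros Hs. pose proof gfun_coef_pos.
  replace (gam / a) with (s * gam ^ 2 * / (s * a * gam)) by (field; repeat split; lra).
  apply is_Int0inf_scal, is_Int0inf_Rpower_exp_Rpower; nra.
Qed.

Lemma is_Int0inf_Zfun s : 0 < s -> is_Int0inf (integrand s) (Zfun gam c We s).
Proof.
  intros Hs.
  destruct (ex_Int0inf_dominated (integrand s) (fun r => (base s) r + (correction s) r)
              (Rpower (s * a) (2 / gam) * Gamma (1 - 2 / gam) / 2 + gam / a))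
    as [l Hl].
  - unfold gfun. solve_continuous_on_pos.
  - solve_continuous_on_pos.
  - intros r Hr. pose proof (Zfun_integrand_bounds s r Hs Hr). lra.
  - exact (is_Int0inf_plus _ _ _ _ (is_Int0inf_Zfun_base s Hs) (is_Int0inf_Zfun_correction s Hs)).
  - unfold Zfun. rewrite (is_Int0inf_unique _ _ Hl). exact Hl.
Qed.

Lemma Zfun_bounds s : 0 < s ->
  Rpower (s * a) (2 / gam) * Gamma (1 - 2 / gam) / 2 < Zfun gam c We s
  <= Rpower (s * a) (2 / gam) * Gamma (1 - 2 / gam) / 2 + gam / a.
Proof.
  intros Hs.
  assert (Hcont : continuous_on_pos (integrand s)) by (unfold gfun; solve_continuous_on_pos).
  split.
  - apply (is_Int0inf_lt (base s) (integrand s)); [solve_continuous_on_pos|exact Hcont| | |].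
    + apply is_Int0inf_Zfun_base, Hs.
    + apply is_Int0inf_Zfun, Hs.
    + intros r Hr. apply (Zfun_integrand_bounds s r Hs Hr).
  - apply (is_Int0inf_le (integrand s) (fun r => (base s) r + (correction s) r));
      [exact Hcont|solve_continuous_on_pos| | |].
    + apply is_Int0inf_Zfun, Hs.
    + exact (is_Int0inf_plus _ _ _ _ (is_Int0inf_Zfun_base s Hs) (is_Int0inf_Zfun_correction s Hs)).
    + intros r Hr. apply (Zfun_integrand_bounds s r Hs Hr).
Qed.

Lemma gfun_pos r : 0 < r -> 0 < gfun gam c We r.
Proof.
  intros Hr. pose proof gfun_coef_pos. unfold gfun. apply Rmult_lt_0_compat; [apply exp_pos|].
  pose proof (pow2_ge_0 gam). assert (0 < r ^ 2) by (apply pow_lt, Hr). nra.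
Qed.

Lemma Zfun_ratio_bounds s t : 0 < s -> s <= t ->
  Zfun gam c We s <= Zfun gam c We t <= t / s * Zfun gam c We s.
Proof.
  intros Hs Hst.
  assert (Hcont : forall u, continuous_on_pos (integrand u))
    by (intros u; unfold gfun; solve_continuous_on_pos).
  assert (Hpt : forall r, 0 < r ->
            (integrand s) r <= (integrand t) r <= t / s * (integrand s) r).
  { intros r Hr. pose proof (gfun_pos r Hr). cbv beta.
    replace (- s * gfun gam c We r) with (- (s * gfun gam c We r)) by ring.
    replace (- t * gfun gam c We r) with (- (t * gfun gam c We r)) by ring.
    assert (Hle : 1 - exp (- (s * gfun gam c We r)) <= 1 - exp (- (t * gfun gam c We r)))
      by (apply Rplus_le_compat_l, Ropp_le_contravar, exp_le; nra).
    pose proof (one_minus_exp_ratio (s * gfun gam c We r) (t * gfun gam c We r)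
                  ltac:(nra) ltac:(nra)) as Hratio.
    replace (t * gfun gam c We r / (s * gfun gam c We r)) with (t / s) in Hratio by (field; lra).
    split; [nra|]. rewrite <- Rmult_assoc. apply Rmult_le_compat_r; lra. }
  split.
  - apply (is_Int0inf_le (integrand s) (integrand t)); auto;
      [apply is_Int0inf_Zfun; lra|apply is_Int0inf_Zfun; lra|intros r Hr; apply Hpt, Hr].
  - apply (is_Int0inf_le (integrand t) (fun r => t / s * (integrand s) r)); auto.
    + intros x Hx. apply (continuous_scal_r (t / s) (integrand s)), Hcont, Hx.
    + apply is_Int0inf_Zfun; lra.
    + apply is_Int0inf_scal, is_Int0inf_Zfun, Hs.
    + intros r Hr. apply Hpt, Hr.
Qed.

Lemma continuous_Zfun s : 0 < s -> continuous (Zfun gam c We) s.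
Proof.
  intros Hs. apply continuous_of_ratio_bounds; [exact Hs|].
  intros u v Hu Huv. apply Zfun_ratio_bounds; assumption.
Qed.

Local Notation m := (PI * lam * Rpower a (2 / gam) * Gamma (1 - 2 / gam)).
Local Notation crb_integrand := (fun s => exp (- 2 * PI * lam * Zfun gam c We s)).
Local Notation crb_majorant := (fun s => exp (- (m * Rpower s (2 / gam)))).

Lemma m_pos : 0 < m.
Proof.
  pose proof PI_RGT_0. apply Rmult_lt_0_compat; [apply Rmult_lt_0_compat; [nra|apply exp_pos]|].
  apply Gammgfun_coef_pos. pose proof (Rdiv_2_in_0_1 gam Hgam). lra.
Qed.

Lemma crb_integrand_bounds s : 0 < s ->
  exp (- (2 * PI * lam * (gam / a))) * crb_majorant s <= crb_integrand s < crb_majorant s.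
Proof.
  intros Hs. pose proof gfun_coef_pos. pose proof PI_RGT_0.
  assert (Hm : 2 * PI * lam * (Rpower (s * a) (2 / gam) * Gamma (1 - 2 / gam) / 2)
               = m * Rpower s (2 / gam)).
  { rewrite <- Rpower_mult_distr by assumption. field. }
  destruct (Zfun_bounds s Hs) as [Hlow Hup].
  assert (Hk : 0 < 2 * PI * lam) by nra.
  cbv beta. rewrite <- exp_plus. split.
  - apply exp_le. rewrite <- Hm. apply (Rmult_le_compat_l (2 * PI * lam)) in Hup; lra.
  - apply exp_increasing. rewrite <- Hm. apply (Rmult_lt_compat_l (2 * PI * lam)) in Hlow; lra.
Qed.

Lemma crb_integrand_continuous : continuous_on_pos crb_integrand.
Proof.
  intros s Hs. apply (continuous_exp_comp (fun s => - 2 * PI * lam * Zfun gam c We s)).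
  apply (continuous_scal_r (- 2 * PI * lam) (Zfun gam c We)), continuous_Zfun, Hs.
Qed.

Lemma crb_majorant_continuous : continuous_on_pos crb_majorant.
Proof. solve_continuous_on_pos. Qed.

Lemma is_Int0inf_CRB_LBW : is_Int0inf crb_majorant (rho / 4 * CRB_LBW lam gam c rho We).
Proof.
  pose proof gfun_coef_pos. pose proof PI_RGT_0. pose proof m_pos.
  assert (HG : 0 < Gamma (1 - 2 / gam)).
  { apply Gammgfun_coef_pos. pose proof (Rdiv_2_in_0_1 gam Hgam). lra. }
  replace (rho / 4 * CRB_LBW lam gam c rho We)
    with (Rpower m (- / (2 / gam)) * Gamma (1 + / (2 / gam))).
  { apply is_Int0inf_exp_Rpower; [exact m_pos|apply Rdiv_lt_0_compat; lra]. }
  replace (/ (2 / gam)) with (gam / 2) by (field; lra).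
  assert (Hpl : 0 < PI * lam) by nra.
  rewrite <- !Rpower_mult_distr, Rpower_mult
    by (try apply Rmult_lt_0_compat; try apply exp_pos; lra).
  replace (2 / gam * - (gam / 2)) with (-1) by (field; lra).
  rewrite Rpower_neg_1 by assumption. unfold CRB_LBW.
  replace (- (gam / 2)) with (- gam / 2) by field. field. repeat split; lra.
Qed.

Lemma is_Int0inf_CRB_LB : is_Int0inf crb_integrand (rho / 4 * CRB_LB lam gam c rho We).
Proof.
  destruct (ex_Int0inf_dominated crb_integrand crb_majorant (rho / 4 * CRB_LBW lam gam c rho We)
              crb_integrand_continuous crb_majorant_continuous) as [L HL].
  - intros s Hs. pose proof (crb_integrand_bounds s Hs). split; [left; apply exp_pos|lra].
  - exact is_Int0inf_CRB_LBW.
  - unfold CRB_LB. rewrite (is_Int0inf_unique _ _ HL).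
    replace (rho / 4 * (4 / rho * L)) with L by (field; lra). exact HL.
Qed.

Lemma CRB_LB_bounds :
  0 < CRB_LBW lam gam c rho We
  /\ exp (- (PI * lam * c ^ 2 * gam / (2 * We))) * CRB_LBW lam gam c rho We
     <= CRB_LB lam gam c rho We
  /\ CRB_LB lam gam c rho We < CRB_LBW lam gam c rho We.
Proof.
  assert (Hx : 2 * PI * lam * (gam / a) = PI * lam * c ^ 2 * gam / (2 * We))
    by (field; split; lra).
  assert (HW : 0 < rho / 4 * CRB_LBW lam gam c rho We).
  { apply (is_Int0inf_pos _ _ crb_majorant_continuous is_Int0inf_CRB_LBW).
    intros s _. apply exp_pos. }
  assert (Hlow : exp (- (2 * PI * lam * (gam / a))) * (rho / 4 * CRB_LBW lam gam c rho We)
                 <= rho / 4 * CRB_LB lam gam c rho We).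
  { apply (is_Int0inf_le (fun s => exp (- (2 * PI * lam * (gam / a))) * crb_majorant s)
                         crb_integrand).
    - intros s Hs. apply (continuous_scal_r _ crb_majorant), crb_majorant_continuous, Hs.
    - exact crb_integrand_continuous.
    - apply is_Int0inf_scal, is_Int0inf_CRB_LBW.
    - exact is_Int0inf_CRB_LB.
    - intros s Hs. apply crb_integrand_bounds, Hs. }
  assert (Hupp : rho / 4 * CRB_LB lam gam c rho We < rho / 4 * CRB_LBW lam gam c rho We).
  { apply (is_Int0inf_lt _ _ _ _ crb_integrand_continuous crb_majorant_continuous
             is_Int0inf_CRB_LB is_Int0inf_CRB_LBW).
    intros s Hs. apply crb_integrand_bounds, Hs. }
  rewrite Hx in Hlow.
  assert (Hr : 0 < rho / 4) by lra.
  split; [|split].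
  - apply (Rmult_lt_reg_l (rho / 4)); lra.
  - apply (Rmult_le_reg_l (rho / 4)); [exact Hr|]. lra.
  - apply (Rmult_lt_reg_l (rho / 4)); assumption.
Qed.

End Bounds.

Lemma CRB_LB_ratio_bound lam gam c rho We :
  0 < lam -> 2 < gam -> 0 < c -> 0 < rho -> 0 < We ->
  (1 - PI * lam * c ^ 2 * gam / (2 * We)) * CRB_LBW lam gam c rho We < CRB_LB lam gam c rho We
  /\ CRB_LB lam gam c rho We < CRB_LBW lam gam c rho We
  /\ Rabs (CRB_LB lam gam c rho We / CRB_LBW lam gam c rho We - 1)
     <= PI * lam * c ^ 2 * gam / 2 / We.
Proof.
  intros Hlam Hgam Hc Hrho HWe.
  destruct (CRB_LB_bounds lam gam c rho We Hlam Hgam Hc Hrho HWe) as (HW & Hlow & Hupp).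
  set (W := CRB_LBW lam gam c rho We) in *. set (L := CRB_LB lam gam c rho We) in *.
  set (x := PI * lam * c ^ 2 * gam / (2 * We)) in *.
  assert (Hx : 0 < x).
  { pose proof PI_RGT_0. assert (0 < c ^ 2) by (apply pow_lt, Hc).
    unfold x. apply Rdiv_lt_0_compat; [|lra].
    apply Rmult_lt_0_compat; [apply Rmult_lt_0_compat; [apply Rmult_lt_0_compat|]|]; lra. }
  (* [1 - x < exp (- x)] makes the lower bound strict *)
  pose proof (exp_ineq1 (- x) ltac:(lra)).
  assert (Hstrict : (1 - x) * W < L) by nra.
  split; [exact Hstrict|split; [exact Hupp|]].
  replace (PI * lam * c ^ 2 * gam / 2 / We) with x by (unfold x; field; lra).
  assert (1 - x < L / W) by (apply (Rmult_lt_reg_r W); [exact HW|]; field_simplify; lra).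
  assert (L / W < 1) by (apply (Rmult_lt_reg_r W); [exact HW|]; field_simplify; lra).
  apply Rabs_le. lra.
Qed.

Theorem corollary1 (lam gam c rho : R) :
  0 < lam -> 2 < gam -> 0 < c -> 0 < rho ->
  (forall We : R, 0 < We ->
     (1 - PI * lam * c ^ 2 * gam / (2 * We)) * CRB_LBW lam gam c rho We
       < CRB_LB lam gam c rho We
     /\ CRB_LB lam gam c rho We < CRB_LBW lam gam c rho We)
  /\ filterlim (fun We => CRB_LB lam gam c rho We / CRB_LBW lam gam c rho We)
       (Rbar_locally p_infty) (locally 1)
  /\ (exists K : R, forall We : R, 0 < We ->
       Rabs (CRB_LB lam gam c rho We / CRB_LBW lam gam c rho We - 1) <= K / We).
Proof.
  intros Hlam Hgam Hc Hrho.
  set (K := PI * lam * c ^ 2 * gam / 2).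
  assert (HK : 0 < K).
  { pose proof PI_RGT_0. assert (0 < c ^ 2) by (apply pow_lt, Hc).
    unfold K. apply Rdiv_lt_0_compat; [|lra].
    apply Rmult_lt_0_compat; [apply Rmult_lt_0_compat; [apply Rmult_lt_0_compat|]|]; lra. }
  assert (Hrate : forall We, 0 < We ->
            Rabs (CRB_LB lam gam c rho We / CRB_LBW lam gam c rho We - 1) <= K / We)
    by (intros We HWe; apply (CRB_LB_ratio_bound lam gam c rho We); assumption).
  split; [|split].
  - intros We HWe.
    destruct (CRB_LB_ratio_bound lam gam c rho We Hlam Hgam Hc Hrho HWe) as (Hlow & Hupp & _).
    split; assumption.
  - exact (filterlim_of_rate _ _ K HK Hrate).
  - exists K. exact Hrate.
Qed.
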